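(* Let $(A,E)$ be the direct producted noncommutative probability space over $D_N$ of noncommutative probability spaces $(A_1,\varphi_1),\dots,(A_N,\varphi_N)$. For $j=1,\dots,N$ let $A_j^{\wedge}=\mathbb{C}\times\cdots\times\mathbb{C}\times A_j\times\mathbb{C}\times\cdots\times\mathbb{C}$, i.e. the subalgebra of $A$ of tuples whose $j$-th coordinate is arbitrary in $A_j$ and whose $i$-th coordinate is a scalar multiple of $1_{A_i}$ for $i\neq j$. Then $A_1^{\wedge},\dots,A_N^{\wedge}$ are free from each other over $D_N$ in $(A,E)$.
   Context: Each $(A_j,\varphi_j)$ is a unital complex algebra with a linear functional. $A=\times_{j=1}^N A_j$ with componentwise operations; $D_N=\mathbb{C}^N$ with componentwise operations, identified with the central subalgebra $\{(\alpha_1 1,\dots,\alpha_N 1)\}$ of $A$; $E((a_1,\dots,a_N))=(\varphi_1(a_1),\dots,\varphi_N(a_N))$. $D_N$-valued cumulants: $k_n(y_1,\dots,y_n)=\sum_{\pi\in NC(n)}\prod_{V\in\pi}E(\prod_{l\in V}y_l)\,\mu(\pi,1_n)$. Subalgebras containing $D_N$ are free over $D_N$ if all their mixed $D_N$-valued cumulants vanish. *)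

From HB Require Import structures.
From mathcomp Require Import all_boot all_order all_algebra.
From mathcomp Require Import reals complex.

Set Implicit Arguments.
Unset Strict Implicit.
Unset Printing Implicit Defensive.

Import Order.TTheory GRing.Theory Num.Theory.
Local Open Scope ring_scope.

Definition is_set_partition (n : nat) (pi : {set {set 'I_n}}) : bool :=
  partition pi [set: 'I_n].

Definition noncrossing (n : nat) (pi : {set {set 'I_n}}) : bool :=
  [forall a : 'I_n, forall b : 'I_n, forall c : 'I_n, forall d : 'I_n,
     [&& (a < b)%N, (b < c)%N, (c < d)%N,
         pblock pi a == pblock pi c & pblock pi b == pblock pi d]
     ==> (pblock pi a == pblock pi b)].

Definition is_NC (n : nat) (pi : {set {set 'I_n}}) : bool :=
  is_set_partition pi && noncrossing pi.

Definition refines (n : nat) (pi rho : {set {set 'I_n}}) : bool :=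
  [forall V in pi, exists W in rho, V \subset W].

Definition one_part (n : nat) : {set {set 'I_n}} := [set [set: 'I_n]].

(* Strictly coarser partitions have strictly fewer blocks, so fuel n
   (the maximal number of blocks) suffices. *)
Fixpoint mobius_fuel (C : nzRingType) (n : nat) (k : nat)
    (pi : {set {set 'I_n}}) : C :=
  if pi == one_part n then 1 else
  match k with
  | 0 => 0
  | k'.+1 =>
      - \sum_(rho : {set {set 'I_n}} |
                [&& is_NC rho, refines pi rho & rho != pi])
          mobius_fuel C k' rho
  end.

Definition mobius_NC (C : nzRingType) (n : nat) (pi : {set {set 'I_n}}) : C :=
  mobius_fuel C n pi.

Section DirectProduct.
Variable R : realType.
Local Notation C := (R[i]).
Variable N : nat.
Variable A : 'I_N -> algType C.

Definition prodA : Type := forall j : 'I_N, A j.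
Definition mulA (x y : prodA) : prodA := fun j => x j * y j.
Definition oneA : prodA := fun j => 1.

Definition DN : Type := 'I_N -> C.
Definition DN_embed (a : DN) : prodA := fun j => a j *: (1 : A j).

Definition Eprod (phi : forall j : 'I_N, {scalar A j}) (x : prodA) : DN :=
  fun j => phi j (x j).

(* D_N-valued cumulant
   k_n(y_1..y_n) = sum_{pi in NC(n)} prod_{V in pi} E(prod_{l in V} y_l) mu(pi,1_n),
   with the product over l in V taken in increasing order of l in A, and the
   operations of D_N (sum, product, scalar) computed componentwise. *)
Definition DN_cumulant (phi : forall j : 'I_N, {scalar A j}) (n : nat)
    (y : 'I_n -> prodA) : DN :=
  fun j => \sum_(pi : {set {set 'I_n}} | is_NC pi)
             (\prod_(V in pi) Eprod phi (\big[mulA/oneA]_(l in V) y l) j)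
             * mobius_NC C pi.

(* Subalgebras B_1..B_N (as predicates on A, each containing D_N) are free over
   D_N iff all mixed D_N-valued cumulants vanish: for every n >= 1, every
   choice of indices i_1..i_n not all equal and y_l in B_{i_l},
   k_n(y_1,...,y_n) = 0. *)
Definition free_over_DN (phi : forall j : 'I_N, {scalar A j})
    (B : 'I_N -> prodA -> Prop) : Prop :=
  forall (n : nat) (ind : 'I_n.+1 -> 'I_N) (y : 'I_n.+1 -> prodA),
    (forall l, B (ind l) (y l)) ->
    (exists l l', ind l != ind l') ->
    DN_cumulant phi y = (fun _ => 0).

Definition hat_subalg (j : 'I_N) (x : prodA) : Prop :=
  forall i : 'I_N, i != j -> exists c : C, x i = c *: (1 : A i).

End DirectProduct.

(* As the indices are not all equal, some argument y_m lies
   in a factor A_i^ with i <> j, so its j-th coordinate is a scalar c 1, and the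
   j-th coordinate of the cumulant is a scalar free cumulant of (A_j, phi_j)
   with a scalar entry.  Such cumulants vanish: making m a singleton block is an
   interior operator on NC(n) whose image avoids 1_n, the moments are constant
   on its fibres (c factors out and phi_j 1 = 1), and mu(., 1_n) sums to zero
   over each fibre, by induction over the fixed points tau, since
   sum_(rho >= tau) mu(rho, 1_n) = 0 for tau <> 1_n. *)

From Pilot Require Import Defs.
From HB Require Import structures.
From mathcomp Require Import all_boot all_order all_algebra.
From mathcomp Require Import reals complex boolp.

Set Implicit Arguments.
Unset Strict Implicit.
Unset Printing Implicit Defensive.

Import Order.TTheory GRing.Theory Num.Theory.
Local Open Scope ring_scope.

Section SetPartitions.
Variable n : nat.
Implicit Types (P Q S : {set {set 'I_n}}) (V W : {set 'I_n}) (x y : 'I_n).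

Lemma set_partitionP P :
  reflect [/\ cover P = setT, trivIset P & set0 \notin P] (is_set_partition P).
Proof. by apply: (iffP and3P) => -[/eqP-> -> ->]. Qed.

Lemma part_mem_pblock P x : is_set_partition P -> x \in pblock P x.
Proof. by case/set_partitionP => coverP _ _; rewrite mem_pblock coverP inE. Qed.

Lemma part_pblock_mem P x : is_set_partition P -> pblock P x \in P.
Proof. by case/set_partitionP => coverP _ _; rewrite pblock_mem // coverP inE. Qed.

Lemma part_same_pblock P x y :
  is_set_partition P -> y \in pblock P x -> pblock P y = pblock P x.
Proof. by case/set_partitionP => _ trivP _; apply: same_pblock. Qed.

Lemma part_eq_pblock P x y :
  is_set_partition P -> (pblock P x == pblock P y) = (y \in pblock P x).
Proof. by case/set_partitionP => coverP trivP _; rewrite eq_pblock // coverP inE. Qed.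

Lemma part_def_pblock P V x :
  is_set_partition P -> V \in P -> x \in V -> pblock P x = V.
Proof. by case/set_partitionP => _ trivP _; apply: def_pblock. Qed.

Lemma part_block_neq0 P V : is_set_partition P -> V \in P -> V != set0.
Proof. by case/set_partitionP => _ _ P0 VP; apply: contraNneq P0 => <-. Qed.

Lemma eq_set_partition P Q : is_set_partition P -> is_set_partition Q ->
  (forall x y, (y \in pblock P x) = (y \in pblock Q x)) -> P = Q.
Proof.
move=> partP partQ samePQ.
rewrite -(equivalence_partition_pblock partP) -(equivalence_partition_pblock partQ).
by apply: eq_imset => x; apply/setP => y; rewrite !inE samePQ.
Qed.

Lemma refinesP P Q : is_set_partition P -> is_set_partition Q ->
  reflect (forall x y, y \in pblock P x -> y \in pblock Q x) (refines P Q).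
Proof.
move=> partP partQ; apply: (iffP forallP) => [PQ x y yPx | PQ V].
  have /existsP[W /andP[WQ sPxW]] := implyP (PQ (pblock P x)) (part_pblock_mem x partP).
  have xW : x \in W by apply: (subsetP sPxW); apply: part_mem_pblock.
  by rewrite (part_def_pblock partQ WQ xW); apply: (subsetP sPxW).
apply/implyP => VP; have /set0Pn[x xV] := part_block_neq0 partP VP.
apply/existsP; exists (pblock Q x); rewrite part_pblock_mem //=.
by apply/subsetP => y yV; apply: PQ; rewrite (part_def_pblock partP VP xV).
Qed.

Lemma refines_refl P : refines P P.
Proof.
by apply/forallP => V; apply/implyP => VP; apply/existsP; exists V; rewrite VP subxx.
Qed.

Lemma refines_trans Q P S : is_set_partition P -> is_set_partition Q ->
  is_set_partition S -> refines P Q -> refines Q S -> refines P S.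
Proof.
move=> partP partQ partS /(refinesP partP partQ) PQ /(refinesP partQ partS) QS.
by apply/(refinesP partP partS) => x y /PQ/QS.
Qed.

Lemma card_set_partition_le P : is_set_partition P -> (#|P| <= n)%N.
Proof.
move=> partP; have := card_partition partP; rewrite cardsT card_ord => E.
rewrite [leqRHS]E -sum1_card.
by apply: leq_sum => V VP; rewrite card_gt0 (part_block_neq0 partP VP).
Qed.

Lemma card_refines_lt P Q : is_set_partition P -> is_set_partition Q ->
  refines P Q -> Q != P -> (#|Q| < #|P|)%N.
Proof.
move=> partP partQ PQ' QP; have PQ := elimT (refinesP partP partQ) PQ'.
pose f V := if [pick x in V] is Some x then pblock Q x else set0.
have f_pblock x : f (pblock P x) = pblock Q x.
  rewrite /f; case: pickP => [y yPx|/(_ x)]; last by rewrite part_mem_pblock.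
  by apply: part_same_pblock => //; apply: PQ.
have fP : f @: P = Q.
  apply/setP => W; apply/imsetP/idP => [[V VP ->]|WQ].
    have /set0Pn[x xV] := part_block_neq0 partP VP.
    by rewrite -(part_def_pblock partP VP xV) f_pblock part_pblock_mem.
  have /set0Pn[x xW] := part_block_neq0 partQ WQ.
  by exists (pblock P x); rewrite ?part_pblock_mem // f_pblock (part_def_pblock partQ WQ xW).
rewrite -fP ltn_neqAle leq_imset_card andbT.
apply: contra QP => /imset_injP f_inj; apply/eqP/esym/eq_set_partition => // x y.
apply/idP/idP => [|yQx]; first exact: PQ.
have := f_pblock y; rewrite (part_same_pblock partQ yQx) -f_pblock.
move/f_inj => /(_ (part_pblock_mem _ partP) (part_pblock_mem _ partP)) <-.
by rewrite part_mem_pblock.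
Qed.

End SetPartitions.

Section MobiusNC.
Variable n : nat.
Hypothesis n_gt0 : (0 < n)%N.
Variable C : nzRingType.
Implicit Types (P Q : {set {set 'I_n}}) (x : 'I_n).

Lemma one_part_partition : is_set_partition (one_part n).
Proof.
apply/set_partitionP; split; rewrite ?cover1 ?trivIset1 // inE.
by apply/eqP => /setP/(_ (Ordinal n_gt0)); rewrite !inE.
Qed.

Lemma pblock_one_part x : pblock (one_part n) x = setT.
Proof. by apply: part_def_pblock; rewrite ?one_part_partition ?inE. Qed.

Lemma card_le1_one_part P : is_set_partition P -> (#|P| <= 1)%N -> P = one_part n.
Proof.
move=> partP /card_le1_eqP P_le1.
apply: eq_set_partition => //; first exact: one_part_partition.
move=> x y; rewrite pblock_one_part inE.
by rewrite -(P_le1 _ _ (part_pblock_mem x partP) (part_pblock_mem y partP)) part_mem_pblock.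
Qed.

Lemma mobius_fuel_stable k k' P : is_set_partition P ->
  (#|P| <= k.+1)%N -> (#|P| <= k'.+1)%N -> mobius_fuel C k P = mobius_fuel C k' P.
Proof.
elim: k k' P => [|k IH] k' P partP leP_k leP_k'.
  by rewrite (card_le1_one_part partP leP_k); case: k' {leP_k'} => /= [|k']; rewrite eqxx.
case: k' leP_k' => [|k'] leP_k' /=; first by rewrite (card_le1_one_part partP leP_k') eqxx.
case: ifP => // _; congr (- _); apply: eq_bigr => Q /and3P[/andP[partQ _] PQ QP].
have ltQP := card_refines_lt partP partQ PQ QP.
by apply: IH => //; rewrite -ltnS (leq_trans ltQP).
Qed.

Lemma mobius_NC_fuel k P : is_set_partition P -> (#|P| <= k.+1)%N ->
  mobius_NC C P = mobius_fuel C k P.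
Proof.
move=> partP leP_k; apply: mobius_fuel_stable => //.
exact: leq_trans (card_set_partition_le partP) _.
Qed.

Lemma mobius_NC_rec P : is_NC P -> P != one_part n ->
  mobius_NC C P = - \sum_(Q | [&& is_NC Q, refines P Q & Q != P]) mobius_NC C Q.
Proof.
case/andP => partP _ P_neq1.
have : (1 < #|P|)%N by rewrite ltnNge; apply: contra P_neq1 => /(card_le1_one_part partP)->.
case cardP: #|P| => [|[|k]] // _.
rewrite (@mobius_NC_fuel k.+1) ?cardP //= (negbTE P_neq1); congr (- _).
apply: eq_bigr => Q /and3P[/andP[partQ _] PQ QP]; apply: esym; apply: mobius_NC_fuel => //.
by rewrite -ltnS -cardP card_refines_lt.
Qed.

Lemma sum_mobius_NC_refines_eq0 P : is_NC P -> P != one_part n ->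
  \sum_(Q | is_NC Q && refines P Q) mobius_NC C Q = 0.
Proof.
move=> NCP P_neq1; rewrite (bigD1 P) /=; last by rewrite NCP refines_refl.
rewrite (mobius_NC_rec NCP P_neq1) addrC.
by under eq_bigl => Q do rewrite -andbA; rewrite subrr.
Qed.

End MobiusNC.

Section Isolate.
Variables (n : nat) (m : 'I_n).
Implicit Types (P Q : {set {set 'I_n}}) (x y : 'I_n).

Definition isolate_rel P : rel 'I_n :=
  fun x y => (x == y) || [&& x != m, y != m & y \in pblock P x].

Definition isolate P := equivalence_partition (isolate_rel P) setT.

Lemma isolate_rel_equiv P : is_set_partition P ->
  {in setT & &, equivalence_rel (isolate_rel P)}.
Proof.
move=> partP x y z _ _ _; rewrite /isolate_rel eqxx; split=> //.
case: (eqVneq x y) => [<-//|_] /= /and3P[xm ym yPx].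
rewrite xm ym (part_same_pblock partP yPx) /=.
case: (eqVneq x z) => [<-|_]; first by rewrite xm part_mem_pblock ?orbT.
by case: (eqVneq y z) => [<-|_]; rewrite ?ym ?yPx.
Qed.

Lemma isolate_partition P : is_set_partition P -> is_set_partition (isolate P).
Proof. by move=> partP; apply: equivalence_partitionP; apply: isolate_rel_equiv. Qed.

Lemma pblock_isolate P x y :
  is_set_partition P -> (y \in pblock (isolate P) x) = isolate_rel P x y.
Proof.
by move=> partP; rewrite pblock_equivalence_partition ?inE //; apply: isolate_rel_equiv.
Qed.

Lemma isolate_NC P : is_NC P -> is_NC (isolate P).
Proof.
case/andP => partP /forallP NCP; rewrite /is_NC isolate_partition //=.
apply/forallP => a; apply/forallP => b; apply/forallP => c; apply/forallP => d.
apply/implyP => /and5P[ab bc cd].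
have ac : a != c by rewrite neq_ltn (ltn_trans ab bc).
have bd : b != d by rewrite neq_ltn (ltn_trans bc cd).
rewrite !part_eq_pblock ?isolate_partition // !pblock_isolate // /isolate_rel.
rewrite (negbTE ac) (negbTE bd) /= => /and3P[am cm cPa] /and3P[bm dm dPb].
rewrite am bm /=; apply/orP; right.
have := implyP (forallP (forallP (forallP (NCP a) b) c) d).
by rewrite ab bc cd !part_eq_pblock // cPa dPb => /(_ isT).
Qed.

Lemma isolate_refines P : is_set_partition P -> refines (isolate P) P.
Proof.
move=> partP; apply/refinesP => [||x y]; rewrite ?isolate_partition //.
rewrite pblock_isolate // => /orP[/eqP <-|/and3P[_ _ //]]; exact: part_mem_pblock.
Qed.

Lemma isolate_mono P Q : is_set_partition P -> is_set_partition Q ->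
  refines P Q -> refines (isolate P) (isolate Q).
Proof.
move=> partP partQ /(refinesP partP partQ) PQ.
apply/refinesP => [||x y]; rewrite ?isolate_partition // !pblock_isolate // /isolate_rel.
by case/orP => [->//|/and3P[-> -> /PQ ->]]; rewrite orbT.
Qed.

Lemma isolate_idem P : is_set_partition P -> isolate (isolate P) = isolate P.
Proof.
move=> partP; have partIP := isolate_partition partP.
apply: eq_set_partition; rewrite ?isolate_partition // => x y.
rewrite !pblock_isolate // /isolate_rel pblock_isolate // /isolate_rel.
by case: (x == y); case: (x == m); case: (y == m).
Qed.

Lemma isolate_neq_one_part z P : z != m -> is_set_partition P -> isolate P != one_part n.
Proof.
move=> zm partP; apply/eqP => P1.
have n_gt0 : (0 < n)%N := leq_ltn_trans (leq0n z) (ltn_ord z).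
have := pblock_isolate z m partP.
by rewrite P1 pblock_one_part // inE /isolate_rel eqxx andbF orbF (negbTE zm).
Qed.

Lemma refines_isolate_fixed P Q : is_set_partition P -> is_set_partition Q ->
  isolate P = P -> refines P (isolate Q) = refines P Q.
Proof.
move=> partP partQ IP; have partIQ := isolate_partition partQ.
apply/idP/idP => [P_IQ|PQ].
  exact: refines_trans partP partIQ partQ P_IQ (isolate_refines partQ).
by rewrite -IP; apply: isolate_mono.
Qed.

End Isolate.

Section MobiusFibres.
Variables (n : nat) (m z : 'I_n) (C : nzRingType).
Hypothesis zm : z != m.
Implicit Types P Q : {set {set 'I_n}}.

Definition mobius_fibre P : C :=
  \sum_(Q | is_NC Q && (isolate m Q == P)) mobius_NC C Q.

Lemma mobius_fibre_eq0 P : is_NC P -> isolate m P = P -> mobius_fibre P = 0.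
Proof.
have [k ltPk] := ubnP #|P|; elim: k => // k IH in P ltPk *.
move=> NCP IP; have partP : is_set_partition P by case/andP: NCP.
have n_gt0 : (0 < n)%N := leq_ltn_trans (leq0n z) (ltn_ord z).
have P_neq1 : P != one_part n by rewrite -IP (isolate_neq_one_part zm).
rewrite -(sum_mobius_NC_refines_eq0 n_gt0 C NCP P_neq1).
(* Group the refinements of P by their image under isolate: the images are the
   fixed points refining P, and all fibres but that of P vanish by induction. *)
rewrite (partition_big (isolate m)
  (fun Q => [&& is_NC Q, isolate m Q == Q & refines P Q])) /=; last first.
  move=> Q /andP[NCQ PQ]; have partQ : is_set_partition Q by case/andP: NCQ.
  by rewrite isolate_NC // isolate_idem // eqxx refines_isolate_fixed.
under eq_bigr => Q /and3P[_ _ PQ].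
  rewrite (eq_bigl (fun R => is_NC R && (isolate m R == Q))); last first.
    move=> R; case/boolP: (is_NC R) => //= /andP[partR _].
    case: eqP => [IRQ|]; rewrite ?andbF ?andbT //.
    by rewrite -(@refines_isolate_fixed _ m) // IRQ.
  over.
rewrite (bigD1 P) /=; last by rewrite NCP IP eqxx refines_refl.
rewrite [X in _ + X]big1 ?addr0 // => Q /andP[/and3P[NCQ /eqP IQ PQ] QP].
have partQ : is_set_partition Q by case/andP: NCQ.
by apply: IH => //; rewrite (leq_trans (card_refines_lt partP partQ PQ QP)).
Qed.

Lemma sum_mobius_isolate_invariant_eq0 (F : {set {set 'I_n}} -> C) :
  (forall P, is_NC P -> F P = F (isolate m P)) ->
  \sum_(P | is_NC P) F P * mobius_NC C P = 0.
Proof.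
move=> F_inv; under eq_bigr => P NCP do rewrite F_inv //.
rewrite (partition_big (isolate m) (fun Q => is_NC Q && (isolate m Q == Q))) /=; last first.
  by move=> P NCP; rewrite isolate_NC // isolate_idem ?eqxx //; case/andP: NCP.
apply: big1 => Q /andP[NCQ /eqP IQ].
rewrite (eq_bigr (fun P => F Q * mobius_NC C P)); last by move=> P /andP[_ /eqP->].
by rewrite -mulr_sumr -/(mobius_fibre Q) mobius_fibre_eq0 // mulr0.
Qed.

End MobiusFibres.

Section IsolateBlocks.
Variables (n : nat) (m : 'I_n).
Implicit Types (P : {set {set 'I_n}}) (V : {set 'I_n}).

Lemma isolateE P : is_set_partition P ->
  isolate m P = ([set m] |: [set V :\ m | V in P]) :\ set0.
Proof.
move=> partP; apply/setP => W; rewrite in_setD1 in_setU1.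
apply/imsetP/idP => [[x _ ->]|].
  case: (eqVneq x m) => [->|xm].
    have -> : [set y in setT | isolate_rel m P m y] = [set m].
      by apply/setP => y; rewrite !inE /isolate_rel eqxx /= orbF eq_sym.
    by rewrite eqxx /= andbT; apply/set0Pn; exists m; rewrite inE.
  have -> : [set y in setT | isolate_rel m P x y] = pblock P x :\ m.
    apply/setP => y; rewrite !inE /isolate_rel xm /=.
    by case: (eqVneq x y) => [<-|//]; rewrite xm part_mem_pblock.
  rewrite (imset_f (fun V => V :\ m)) ?part_pblock_mem ?orbT ?andbT //.
  by apply/set0Pn; exists x; rewrite !inE xm part_mem_pblock.
case/andP => W0 /orP[/eqP WE|/imsetP[V VP WE]]; subst W.
  exists m; rewrite ?inE //; apply/setP => y.
  by rewrite !inE /isolate_rel eqxx /= orbF eq_sym.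
have /set0Pn[x /setD1P[xm xV]] := W0.
exists x; rewrite ?inE //; apply/setP => y.
rewrite !inE /isolate_rel xm /= (part_def_pblock partP VP xV).
by case: (eqVneq x y) => [<-|//]; rewrite xm xV.
Qed.

Lemma setD1_block_inj P : is_set_partition P -> {in P &, injective (fun V => V :\ m)}.
Proof.
move=> partP V V' VP V'P /= eqVV'.
have mem_block U x : U \in P -> x \in U :\ m -> U = pblock P x.
  by move=> UP /setD1P[_ xU]; rewrite (part_def_pblock partP UP xU).
have mem_m U : U \in P -> U :\ m = set0 -> m \in U.
  move=> UP U0; have /set0Pn[u uU] := part_block_neq0 partP UP.
  by have := in_set0 u; rewrite -U0 in_setD1 uU andbT => /negbFE/eqP <-.
case: (eqVneq (V :\ m) set0) => [V0|/set0Pn[x xV]].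
  have V'0 : V' :\ m = set0 by rewrite -eqVV'.
  rewrite -(part_def_pblock partP VP (mem_m _ VP V0)).
  by rewrite (part_def_pblock partP V'P (mem_m _ V'P V'0)).
by rewrite (mem_block _ x VP xV) (mem_block _ x V'P) // -eqVV'.
Qed.

Variable K : comNzRingType.

Lemma prod_setD1_eq1 (g : {set 'I_n} -> K) (S : {set {set 'I_n}}) V :
  g V = 1 -> \prod_(W in S :\ V) g W = \prod_(W in S) g W.
Proof.
move=> gV1; have [VS|VS] := boolP (V \in S).
  by rewrite (big_setD1 _ VS) gV1 /= mul1r.
by apply: eq_bigl => W; rewrite in_setD1; case: eqVneq => // ->; rewrite (negbTE VS).
Qed.

Lemma prod_isolate (g : {set 'I_n} -> K) P : is_set_partition P ->
  g set0 = 1 -> (forall V, g (V :\ m) = g V) ->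
  \prod_(W in isolate m P) g W = \prod_(V in P) g V.
Proof.
move=> partP g0 gDm; rewrite isolateE // prod_setD1_eq1 // big_setU1 /=; last first.
  by apply/imsetP => -[V _ /setP/(_ m)]; rewrite !inE eqxx.
have -> : g [set m] = 1 by rewrite -gDm setDv.
rewrite mul1r big_imset /=; last exact: setD1_block_inj.
by apply: eq_bigr => V _; rewrite gDm.
Qed.

Lemma prod_pblock_factor (g : {set 'I_n} -> K) P c : is_set_partition P ->
  \prod_(V in P) ((if m \in V then c else 1) * g V) = c * \prod_(V in P) g V.
Proof.
move=> partP; rewrite big_split /=; congr (_ * _).
rewrite (bigD1 (pblock P m)) ?part_pblock_mem //= part_mem_pblock // big1 ?mulr1 //.
move=> V /andP[VP VPm]; case: ifP => // mV.
by case/eqP: VPm; rewrite (part_def_pblock partP VP mV).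
Qed.

End IsolateBlocks.

Lemma prod_scalar_entry (K : comNzRingType) (B : algType K) (n : nat)
    (x : 'I_n -> B) (m : 'I_n) (c : K) (V : {set 'I_n}) : x m = c *: 1 ->
  \prod_(l in V) x l = (if m \in V then c else 1) *: \prod_(l in V :\ m) x l.
Proof.
move=> xm.
rewrite (eq_bigr (fun l =>
  (if l == m then c else 1) *: (if l == m then 1 else x l))); last first.
  by move=> l _; case: eqP => [->|_]; rewrite ?xm ?scale1r.
rewrite scaler_prod; congr (_ *: _).
  have [mV|mV] := boolP (m \in V); last first.
    by rewrite big1 // => l lV; case: eqP => // lm; rewrite -lm lV in mV.
  by rewrite (bigD1 m) //= eqxx big1 ?mulr1 // => l /andP[_ /negbTE ->].
rewrite [RHS](eq_bigl (fun l => (l \in V) && (l != m))); last by move=> l; rewrite !inE andbC.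
by rewrite big_mkcondr /=; apply: eq_bigr => l _; case: eqP.
Qed.

Section ScalarEntry.
Variables (K : comNzRingType) (B : algType K) (psi : {scalar B}).
Hypothesis psi1 : psi 1 = 1.
Variables (n : nat) (x : 'I_n -> B) (m : 'I_n) (c : K).
Hypothesis xm : x m = c *: 1.

Lemma prod_moments_isolate P : is_set_partition P ->
  \prod_(V in isolate m P) psi (\prod_(l in V) x l) =
  \prod_(V in P) psi (\prod_(l in V) x l).
Proof.
move=> partP; have partIP := isolate_partition m partP.
under eq_bigr => V _ do rewrite (prod_scalar_entry V xm) linearZ.
under [RHS]eq_bigr => V _ do rewrite (prod_scalar_entry V xm) linearZ.
rewrite !prod_pblock_factor //; congr (_ * _).
apply: prod_isolate => // [|V]; first by rewrite set0D big_set0 psi1.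
by rewrite setDDl setUid.
Qed.

End ScalarEntry.

Lemma Eprod_prod (R : realType) (N : nat) (A : 'I_N -> algType R[i])
    (phi : forall j : 'I_N, {scalar A j}) (n : nat) (y : 'I_n -> prodA A)
    (V : {set 'I_n}) (j : 'I_N) :
  Eprod phi (\big[@Defs.mulA _ _ A/@Defs.oneA _ _ A]_(l in V) y l) j =
  phi j (\prod_(l in V) y l j).
Proof. by rewrite /Eprod (big_morph (fun f : prodA A => f j) (id1 := 1) (op1 := *%R)). Qed.

Theorem mainTheorem6 (R : realType) (N : nat) (A : 'I_N -> algType R[i])
    (phi : forall j : 'I_N, {scalar A j})
    (phi_unital : forall j : 'I_N, phi j 1 = 1) :
  free_over_DN phi (@hat_subalg R N A).
Proof.
move=> n ind y y_hat [l [l' ind_ll']]; apply: funext => j.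
have [m ind_mj] : exists m, ind m != j.
  exists (if ind l == j then l' else l).
  by case: (eqVneq (ind l) j) => [<- /=|//]; rewrite eq_sym.
have [z zm] : exists z, z != m.
  exists (if l == m then l' else l).
  by case: (eqVneq l m) => [<- /=|//]; apply: contraNneq ind_ll' => ->.
have [c ymj] : exists c, y m j = c *: 1 by apply: y_hat; rewrite eq_sym.
rewrite /DN_cumulant; under eq_bigr => pi _ do under eq_bigr => V _ do rewrite Eprod_prod.
apply: (sum_mobius_isolate_invariant_eq0 zm) => pi /andP[partpi _].
by rewrite (prod_moments_isolate (phi_unital j) ymj partpi).
Qed.
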